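(* Let $|q|>1$, $n\geq 0$, and consider the function \[ \Phi(z;t_r;u_0,u_1)=\prod_{k=0}^{n-1} \frac{1}{(pq^{n-k}z/u_0,\,q^{n-k} /(u_0z);p)}\cdot \frac{1}{(pu_0z/q,\, u_0/(qz),\,pu_1z/q^n,\,u_1/(q^nz) ;p,q^{-1}) \prod_{r=0}^3 (pt_rz/q,\,t_r/(qz) ;p,q^{-1})}. \] Substitute $z\to zp^{\zeta}$, $t_r\to t_rp^{\alpha_r}$ $(0\le r\le 3)$, $u_0\to u_0p^{\alpha_4}$, $u_1\to u_1p^{\alpha_5}$, with $(\alpha;\zeta)=(\alpha_0,\dots,\alpha_5;\zeta)$ in the polytope $P$. Then the leading coefficient (limit as $p\to0$ after rescaling by $p^{-val}$) of the resulting function depends on $z$ only if $\alpha_r+\tfrac12=|\zeta+\tfrac12|$ for some $0\leq r\leq 5$, or $\alpha_4 + |\zeta+\tfrac12| \geq \tfrac12$.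
   Context: For $|a|<1$ write $(x;a)=\prod_{j\ge0}(1-xa^j)$ and $(x;p,a)=\prod_{i,j\ge0}(1-xp^ia^j)$, written multiplicatively (a comma-separated list of arguments denotes the product). Here $0<|p|<1$, and $t_0,\dots,t_3,u_0,u_1,z$ are independent of $p$. Valuation and leading coefficient refer to the expansion in (real) powers of $p$: if $F\sim c\,p^{v}$ with $c\neq 0$ independent of $p$ as $p\to0$, then $val(F)=v$ and $lc(F)=c$. $P$ is the set of $(\alpha_0,\dots,\alpha_5;\zeta)\in\mathbb{R}^7$ satisfying $\sum_{i=0}^5\alpha_i=1$, $|\tfrac12+\zeta|\le\tfrac12$, $|\tfrac12+\zeta|-\tfrac12\le\alpha_i$ for all $i$, $\alpha_i\le 1+\alpha_j$ and $\alpha_i+\alpha_j\le 1$ for all distinct $i,j$, and $\alpha_i+\alpha_j+\alpha_k+|\tfrac12+\zeta|\le\tfrac32$ for all distinct $i,j,k$ (indices in $\{0,\dots,5\}$). *)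

From HB Require Import structures.
From mathcomp Require Import all_boot all_order all_algebra.
From mathcomp Require Import complex.
From mathcomp Require Import all_classical all_reals all_analysis.
Set Implicit Arguments. Unset Strict Implicit. Unset Printing Implicit Defensive.
Import Order.TTheory GRing.Theory Num.Theory.
Import numFieldNormedType.Exports.
Local Open Scope ring_scope.
Local Open Scope complex_scope.
Local Open Scope classical_set_scope.
Local Open Scope ring_scope.

(* The complex numbers R[i], seen as a numClosedFieldType so that the
   generic norm topology of MathComp-Analysis (modulus topology) applies. *)
Definition Cx (R : realType) : numClosedFieldType := R[i].

Section Defs.
Variable R : realType.
Local Notation C := (Cx R).

Definition qpoch (x a : C) : C :=
  lim ((fun N : nat => \prod_(j < N) (1 - x * a ^+ j)) @ \oo).

Definition qpoch2 (x p a : C) : C :=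
  lim ((fun N : nat => \prod_(i < N) \prod_(j < N) (1 - x * p ^+ i * a ^+ j)) @ \oo).

Definition Phi (n : nat) (p q z : C) (t : 'I_4 -> C) (u0 u1 : C) : C :=
  (\prod_(k < n) (qpoch (p * q ^+ (n - k) * z / u0) p
                  * qpoch (q ^+ (n - k) / (u0 * z)) p))^-1
  * (qpoch2 (p * u0 * z / q) p q^-1 * qpoch2 (u0 / (q * z)) p q^-1
     * qpoch2 (p * u1 * z / q ^+ n) p q^-1 * qpoch2 (u1 / (q ^+ n * z)) p q^-1
     * \prod_(r < 4) (qpoch2 (p * t r * z / q) p q^-1
                      * qpoch2 (t r / (q * z)) p q^-1))^-1.

Definition ord4to6 (r : 'I_4) : 'I_6 := widen_ord (isT : (4 <= 6)%N) r.

Definition cpow (p a : R) : C := ((p `^ a)%:C : R[i]).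

Definition Phi_sub (n : nat) (q z : C) (t : 'I_4 -> C) (u0 u1 : C)
  (alpha : 'I_6 -> R) (zeta : R) (p : R) : C :=
  Phi n (p%:C) q (z * cpow p zeta)
      (fun r => t r * cpow p (alpha (ord4to6 r)))
      (u0 * cpow p (alpha (inord 4))) (u1 * cpow p (alpha (inord 5))).

(* F ~ c p^v as p -> 0+, with c <> 0 : val(F) = v, lc(F) = c *)
Definition has_lc (F : R -> C) (v : R) (c : C) : Prop :=
  c != 0 /\ (F x / cpow x v) @[x --> 0^'+] --> c.

Definition inP (alpha : 'I_6 -> R) (zeta : R) : Prop :=
  [/\ \sum_(i < 6) alpha i = 1,
      `|1/2 + zeta| <= 1/2,
      (forall i, `|1/2 + zeta| - 1/2 <= alpha i),
      (forall i j, i != j -> alpha i <= 1 + alpha j /\ alpha i + alpha j <= 1)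
    & (forall i j k, i != j -> j != k -> i != k ->
         alpha i + alpha j + alpha k + `|1/2 + zeta| <= 3/2)].
End Defs.

From HB Require Import structures.
From mathcomp Require Import all_boot all_order all_algebra.
From mathcomp Require Import complex.
From mathcomp Require Import all_classical all_reals all_analysis.
From mathcomp Require Import ring lra.
Import Order.TTheory GRing.Theory Num.Theory.
Import numFieldNormedType.Exports.
Local Open Scope complex_scope.
Local Open Scope classical_set_scope.
Local Open Scope ring_scope.

(* Under the hypotheses, |zeta + 1/2| < alpha_r + 1/2 for every r and
   alpha_4 + |zeta + 1/2| < 1/2, so after the substitution every argument x of a
   factor (x;p) or (x;p,q^-1) of Phi is a constant times a positive real power
   of p.  Since |(x;a) - 1| <= 2|x|/(1-|a|) whenever |x|/(1-|a|) <= 1/2, and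
   similarly for (x;a,b), Phi tends to 1 as p -> 0+.  So the valuation is 0 and
   the leading coefficient is 1, whatever z is. *)

Section LeadingCoefficient.
Variable R : realType.
Local Notation C := (Cx R).
Local Notation normc := (@Normc.normc R).

Lemma normcE (z : C) : `|z| = (normc z)%:C.
Proof. by case: z => a b; rewrite normc_def. Qed.

Lemma normc_ge0 (z : C) : 0 <= normc z.
Proof. by rewrite -ler0c -normcE. Qed.

Lemma normcD (x y : C) : normc (x + y) <= normc x + normc y.
Proof. exact: le_normcD. Qed.

Lemma normcB (x y : C) : normc (x - y) = normc (y - x).
Proof. by rewrite -opprB; apply: normcN. Qed.

Lemma normcX (x : C) k : normc (x ^+ k) = normc x ^+ k.
Proof. by apply: complexI; rewrite rmorphXn /= -!normcE normrX. Qed.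

Lemma normcR (r : R) : normc r%:C = `|r|.
Proof. by rewrite /= expr0n /= addr0 sqrtr_sqr. Qed.

Lemma normc_le_ReIm (z : C) : normc z <= `|complex.Re z| + `|complex.Im z|.
Proof.
case: z => a b /=.
have -> : `|a| + `|b| = Num.sqrt ((`|a| + `|b|) ^+ 2).
  by rewrite sqrtr_sqr; apply/esym/ger0_norm; rewrite addr_ge0.
apply: ler_wsqrtr.
rewrite sqrrD -[a ^+ 2](@real_normK _ a) ?num_real // -[b ^+ 2](@real_normK _ b) ?num_real //.
have : 0 <= `|a| * `|b| *+ 2 by rewrite mulrn_wge0 ?mulr_ge0.
lra.
Qed.

Lemma Re_le_normc (z : C) : `|complex.Re z| <= normc z.
Proof. by rewrite -lecR -normcE normc_ge_Re. Qed.

Lemma Im_le_normc (z : C) : `|complex.Im z| <= normc z.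
Proof.
have -> : complex.Im z = complex.Re (z * - 'i) by case: z => a b /=; rewrite oppr0 mulr0 mulrN1 opprK add0r.
rewrite (le_trans (Re_le_normc _)) // Normc.normcM normcN.
by rewrite /= expr0n expr1n add0r sqrtr1 mulr1.
Qed.

Lemma cvgCP (T : Type) (F : set_system T) (FF : Filter F) (f : T -> C) (l : C) :
  f t @[t --> F] --> l <->
  (forall e : R, 0 < e -> \forall t \near F, normc (l - f t) < e).
Proof.
rewrite cvgrPdist_lt; split=> [h e e0|h e e0].
  by apply: filterS (h e%:C _) => [t|]; rewrite ?normcE ltcR.
have eR : e = (complex.Re e)%:C by apply/esym/RRe_real; rewrite gtr0_real.
have e0' : 0 < complex.Re e by rewrite -ltcR -eR.
by apply: filterS (h _ e0') => t; rewrite normcE {2}eR ltcR.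
Qed.

Lemma cauchy_cvgC (u : nat -> C) :
  (forall e : R, 0 < e -> exists N, forall M, (N <= M)%N -> normc (u M - u N) <= e) ->
  exists l : C, u n @[n --> \oo] --> l.
Proof.
move=> hc.
have part (f : C -> R) : (forall z, `|f z| <= normc z) -> {morph f : x y / x - y} ->
    cvg ((f \o u) @ \oo).
  move=> fle fB; apply/cauchy_cvgP/cauchy_exP => e e0.
  have [N hN] := hc (e / 2) ltac:(by rewrite divr_gt0).
  exists (f (u N)); exists N => // M /= NM.
  rewrite -ball_normE /= distrC -fB (le_lt_trans (fle _)) //.
  by rewrite (le_lt_trans (hN M NM)) // ltr_pdivrMr // ltr_pMr // ltr1n.
have /cvgrPdist_lt hRe := part _ Re_le_normc ltac:(by move=> [? ?] [? ?]).
have /cvgrPdist_lt hIm := part _ Im_le_normc ltac:(by move=> [? ?] [? ?]).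
set a := limn _ in hRe; set b := limn _ in hIm.
exists (a +i* b); apply/cvgCP => e e0.
near=> n; rewrite (le_lt_trans (normc_le_ReIm _)) //.
have : `|a - complex.Re (u n)| < e / 2 by near: n; apply: hRe; rewrite divr_gt0.
have : `|b - complex.Im (u n)| < e / 2 by near: n; apply: hIm; rewrite divr_gt0.
case: (u n) => /= ? ?; lra.
Unshelve. all: by end_near.
Qed.

(* For s < 1 this says |P - 1| <= s/(1 - s); in this form the bound is
   multiplicative, the budgets s adding up along a product. *)
Definition near_one (P : C) (s : R) : Prop := (1 + normc (P - 1)) * (1 - s) <= 1.

Lemma near_one_ge0 {P s} : near_one P s -> 0 <= s.
Proof. rewrite /near_one => h; have := normc_ge0 (P - 1); nra. Qed.

Lemma near_one1 : near_one 1 0.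
Proof. by rewrite /near_one subrr Normc.normc0 addr0 subr0 mulr1. Qed.

Lemma near_one1B (w : C) : near_one (1 - w) (normc w).
Proof.
rewrite /near_one addrAC subrr add0r normcN; have := normc_ge0 w; nra.
Qed.

Lemma near_oneM P s Q t : near_one P s -> near_one Q t -> near_one (P * Q) (s + t).
Proof.
move=> hP hQ; have /near_one_ge0 s0 := hP; have /near_one_ge0 t0 := hQ.
move: hP hQ; rewrite /near_one.
set a := normc (P - 1); set b := normc (Q - 1).
have a0 : 0 <= a := normc_ge0 _; have b0 : 0 <= b := normc_ge0 _.
have hc : normc (P * Q - 1) <= a * b + a + b.
  have -> : P * Q - 1 = (P - 1) * (Q - 1) + (P - 1) + (Q - 1) by ring.
  by rewrite -Normc.normcM (le_trans (normcD _ _)) ?lerD ?normcD.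
have c0 := normc_ge0 (P * Q - 1).
move=> hP hQ; case: (lerP 1 (s + t)) => st; first nra.
have : (1 + a) * (1 - s) * ((1 + b) * (1 - t)) <= 1 * 1.
  by apply: ler_pM => //; apply: mulr_ge0; lra.
nra.
Qed.

Lemma near_one_le {P s t} : near_one P s -> s <= t -> near_one P t.
Proof. rewrite /near_one => h st; have := normc_ge0 (P - 1); nra. Qed.

Lemma near_one_prod {I : Type} (r : seq I) (Pr : pred I) (F : I -> C) (G : I -> R) :
  (forall i, Pr i -> near_one (F i) (G i)) ->
  near_one (\prod_(i <- r | Pr i) F i) (\sum_(i <- r | Pr i) G i).
Proof. exact: (big_ind2 near_one near_one1 near_oneM). Qed.

Lemma near_one_prod1B {I : Type} (r : seq I) (Pr : pred I) (w : I -> C) :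
  near_one (\prod_(i <- r | Pr i) (1 - w i)) (\sum_(i <- r | Pr i) normc (w i)).
Proof. by apply: near_one_prod => i _; apply: near_one1B. Qed.

Lemma near_one_normB {P s} : near_one P s -> s <= 1/2 -> normc (P - 1) <= 2 * s.
Proof. rewrite /near_one => h hs; have := normc_ge0 (P - 1); nra. Qed.

Lemma near_one_lim (P : nat -> C) (s : R) (T : nat -> R) :
  s <= 1/2 -> (forall N, near_one (P N) s) ->
  (forall N M, (N <= M)%N -> exists Q, P M = P N * Q /\ near_one Q (T N)) ->
  T n @[n --> \oo] --> 0 ->
  normc (lim (P n @[n --> \oo]) - 1) <= 2 * s.
Proof.
move=> s12 hP hPQ /cvgrPdist_lt hT.
have hb N : normc (P N - 1) <= 2 * s by apply: near_one_normB.
have [l hl] : exists l : C, P n @[n --> \oo] --> l.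
  apply: cauchy_cvgC => e e0.
  have [N _ hN] := hT (Num.min (1/2) (e/4)) ltac:(by rewrite lt_min; apply/andP; split; lra).
  exists N => M NM; have [Q [-> hQ]] := hPQ N M NM.
  have := hN N (leqnn N); rewrite /= sub0r normrN lt_min => /andP[hT1 hT2].
  have TQ := near_one_normB hQ (le_trans (ler_norm _) (ltW hT1)).
  have -> : P N * Q - P N = P N * (Q - 1) by ring.
  have PN : normc (P N) <= 2.
    have -> : P N = (P N - 1) + 1 by ring.
    by rewrite (le_trans (normcD _ _)) // Normc.normc1; have := hb N; lra.
  rewrite Normc.normcM; have := normc_ge0 (Q - 1); have := ler_norm (T N); nra.
rewrite (cvg_lim _ hl) //; apply/ler_addgt0Pr => e e0.
have /cvgCP/(_ e e0) [N _ hN] := hl.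
have -> : l - 1 = (l - P N) + (P N - 1) by ring.
have := hN N (leqnn N); have := hb N; have := normcD (l - P N) (P N - 1); rewrite /=; lra.
Qed.

Lemma geometric_tail_le (r : R) (N M : nat) : 0 < r < 1 ->
  \sum_(N <= j < M) r ^+ j <= r ^+ N / (1 - r).
Proof.
case/andP=> r0 r1; have r_ge0 := ltW r0.
have [NM|MN] := leqP N M; last first.
  by rewrite big_geq ?(ltnW MN) // divr_ge0 ?exprn_ge0 ?subr_ge0 ?ltW.
rewrite -(subnKC NM) geometric_partial_tail.
by apply: geometric_le_lim; rewrite ?exprn_ge0 ?ger0_norm.
Qed.

Lemma normc_geo (x a : C) j : normc (x * a ^+ j) = normc x * normc a ^+ j.
Proof. by rewrite Normc.normcM normcX. Qed.

Lemma near_one_qprod (x a : C) (N M : nat) : 0 < normc a < 1 ->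
  near_one (\prod_(N <= j < M) (1 - x * a ^+ j)) (normc x * (normc a ^+ N / (1 - normc a))).
Proof.
move=> ha; apply: near_one_le (near_one_prod1B _ _ (fun j => x * a ^+ j)) _.
under eq_bigr do rewrite normc_geo.
by rewrite -mulr_sumr ler_wpM2l ?normc_ge0 ?geometric_tail_le.
Qed.

Lemma near_one_qprod2 (x a b : C) (N1 M1 N2 M2 : nat) :
  0 < normc a < 1 -> 0 < normc b < 1 ->
  near_one (\prod_(N1 <= i < M1) \prod_(N2 <= j < M2) (1 - x * a ^+ i * b ^+ j))
    (normc x * (normc a ^+ N1 / (1 - normc a)) * (normc b ^+ N2 / (1 - normc b))).
Proof.
move=> ha hb.
apply: near_one_le (near_one_prod _ _ _ _ (fun i _ => near_one_qprod (x * a ^+ i) b N2 M2 hb)) _.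
rewrite -mulr_suml; apply: ler_wpM2r.
  by rewrite divr_ge0 ?exprn_ge0 ?normc_ge0 // subr_ge0 ltW //; case/andP: hb.
under eq_bigr do rewrite normc_geo.
by rewrite -mulr_sumr ler_wpM2l ?normc_ge0 ?geometric_tail_le.
Qed.

Lemma cvg_geometric_scaled (c r : R) : 0 < r < 1 ->
  c * (r ^+ n / (1 - r)) @[n --> \oo] --> 0.
Proof.
case/andP=> r0 r1.
have := @cvg_geometric R (c / (1 - r)) r; rewrite ger0_norm ?ltW // => /(_ r1).
apply: cvg_trans; apply: near_eq_cvg; near=> n; rewrite /=; ring.
Unshelve. all: by end_near.
Qed.

Lemma normc_qpoch_sub1_le (x a : C) : 0 < normc a < 1 -> normc x / (1 - normc a) <= 1/2 ->
  normc (qpoch x a - 1) <= 2 * (normc x / (1 - normc a)).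
Proof.
move=> ha hs.
have ek N : \prod_(j < N) (1 - x * a ^+ j) = \prod_(0 <= j < N) (1 - x * a ^+ j).
  by rewrite big_mkord.
apply: (@near_one_lim _ _ (fun N => normc x * (normc a ^+ N / (1 - normc a)))) => //.
- by move=> N; rewrite ek; have := near_one_qprod x a 0 N ha; rewrite expr0 mul1r.
- move=> N M NM; rewrite !ek (big_cat_nat (leq0n N) NM) /=.
  by eexists; split; [reflexivity | exact: near_one_qprod].
- exact: cvg_geometric_scaled.
Qed.

Lemma normc_qpoch2_sub1_le (x a b : C) : 0 < normc a < 1 -> 0 < normc b < 1 ->
  normc x / (1 - normc a) / (1 - normc b) <= 1/2 ->
  normc (qpoch2 x a b - 1) <= 2 * (normc x / (1 - normc a) / (1 - normc b)).
Proof.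
move=> ha hb hs; set F := fun i j : nat => 1 - x * a ^+ i * b ^+ j.
set s := normc x / _ / _ in hs *.
set ra := normc a; set rb := normc b.
have es : s = normc x * (ra ^+ 0 / (1 - ra)) * (rb ^+ 0 / (1 - rb)).
  by rewrite !expr0 !mul1r.
have ek N : \prod_(i < N) \prod_(j < N) F i j = \prod_(0 <= i < N) \prod_(0 <= j < N) F i j.
  by rewrite big_mkord; apply: eq_bigr => i _; rewrite big_mkord.
apply: (@near_one_lim _ _ (fun N => normc x * (ra ^+ 0 / (1 - ra)) * (rb ^+ N / (1 - rb))
                                  + normc x * (ra ^+ N / (1 - ra)) * (rb ^+ 0 / (1 - rb)))) => //.
- by move=> N; rewrite ek es; apply: near_one_qprod2.
- move=> N M NM; rewrite !ek.
  (* The M x M square of factors is the N x N square times two strips. *)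
  exists ((\prod_(0 <= i < N) \prod_(N <= j < M) F i j) *
          (\prod_(N <= i < M) \prod_(0 <= j < M) F i j)); split.
    rewrite (big_cat_nat (leq0n N) NM) /= mulrA; congr (_ * _).
    by rewrite -big_split /=; apply: eq_bigr => i _; rewrite (big_cat_nat (leq0n N) NM).
  by apply: near_oneM; apply: near_one_qprod2.
- rewrite -[0]addr0; apply: cvgD.
    exact: cvg_geometric_scaled.
  by under eq_fun do rewrite mulrAC; apply: cvg_geometric_scaled.
Qed.

Lemma cvg1_of_bound {T : Type} {G : set_system T} {FG : Filter G} (K : R) (F X : T -> C) :
  X t @[t --> G] --> (0 : C) ->
  (\forall t \near G, normc (F t - 1) <= K * normc (X t)) ->
  F t @[t --> G] --> (1 : C).
Proof.
move=> /cvgCP hX hF; apply/cvgCP => e e0.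
have eK : 0 < e / (`|K| + 1) by rewrite divr_gt0 // ltr_pwDr.
near=> t; rewrite normcB.
have : normc (0 - X t) < e / (`|K| + 1) by near: t; exact: hX.
rewrite sub0r normcN ltr_pdivlMr ?ltr_pwDr // => hXt.
have := normc_ge0 (X t); have := ler_norm K; have := normr_ge0 K.
have : normc (F t - 1) <= K * normc (X t) by near: t.
nra.
Unshelve. all: by end_near.
Qed.

Lemma ger0_normcR (p : R) : 0 <= p -> normc p%:C = p.
Proof. by move=> p0; rewrite normcR ger0_norm. Qed.

Lemma qpoch_cvg1 (X : R -> C) :
  X p @[p --> 0^'+] --> (0 : C) -> qpoch (X p) p%:C @[p --> 0^'+] --> (1 : C).
Proof.
move=> hX; apply: (cvg1_of_bound 4 _ _ hX).
have /cvgCP/(_ (1/4) ltac:(lra)) hX4 := hX.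
near=> p.
have p0 : 0 < p by near: p; exact: nbhs_right_gt.
have p12 : p < 1/2 by near: p; apply: nbhs_right_lt; lra.
have : normc (0 - X p) < 1/4 by near: p.
rewrite sub0r normcN => hXp; have := normc_ge0 (X p) => hX0.
have hs : normc (X p) / (1 - p) <= 1/2 by rewrite ler_pdivrMr; nra.
have hp : 0 < p < 1 by apply/andP; split; lra.
have := normc_qpoch_sub1_le (X p) p%:C; rewrite ger0_normcR; last exact: ltW.
move=> /(_ hp hs) /le_trans; apply; rewrite mulrA ler_pdivrMr; nra.
Unshelve. all: by end_near.
Qed.

Lemma qpoch2_cvg1 (X : R -> C) (b : C) : 0 < normc b < 1 ->
  X p @[p --> 0^'+] --> (0 : C) -> qpoch2 (X p) p%:C b @[p --> 0^'+] --> (1 : C).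
Proof.
move=> hb hX; set d := 1 - normc b.
have d0 : 0 < d by rewrite subr_gt0; case/andP: hb.
apply: (cvg1_of_bound (4 / d) _ _ hX).
have /cvgCP/(_ (d / 4) ltac:(by rewrite divr_gt0)) hXd := hX.
near=> p.
have p0 : 0 < p by near: p; exact: nbhs_right_gt.
have p12 : p < 1/2 by near: p; apply: nbhs_right_lt; lra.
have : normc (0 - X p) < d / 4 by near: p.
rewrite sub0r normcN => hXp; have := normc_ge0 (X p) => hX0.
have hp : 0 < p < 1 by apply/andP; split; lra.
have hs : normc (X p) / (1 - p) / d <= 1/2.
  by rewrite -mulrA -invfM ler_pdivrMr ?mulr_gt0 ?subr_gt0 //; nra.
have := normc_qpoch2_sub1_le (X p) p%:C b; rewrite ger0_normcR; last exact: ltW.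
move=> /(_ hp hb hs) /le_trans; apply.
rewrite mulrAC [4 / d * _]mulrAC -[4 * _ / d]mulrA -/d.
have e0 : 0 <= normc (X p) / d by rewrite divr_ge0 // ltW.
set e := normc (X p) / d in e0 *.
rewrite mulrA ler_pdivrMr; last lra.
nra.
Unshelve. all: by end_near.
Qed.

Lemma cpowD (p a b : R) : 0 < p -> cpow p (a + b) = cpow p a * cpow p b.
Proof.
move=> p0; rewrite /cpow powRD; last by rewrite (gt_eqF p0) implybT.
by rewrite rmorphM.
Qed.

Lemma cpowN (p a : R) : cpow p (- a) = (cpow p a)^-1.
Proof. by rewrite /cpow powRN fmorphV. Qed.

Lemma cpow1 (p : R) : 0 <= p -> cpow p 1 = p%:C.
Proof. by move=> p0; rewrite /cpow powRr1. Qed.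

Lemma cpow0 (p : R) : cpow p 0 = 1.
Proof. by rewrite /cpow powRr0. Qed.

Lemma normc_cpow (p a : R) : normc (cpow p a) = p `^ a.
Proof. by rewrite ger0_normcR ?powR_ge0. Qed.

Lemma cpow_neq0 (p a : R) : 0 < p -> cpow p a != 0.
Proof.
move=> p0; apply/eqP => /(congr1 normc).
by rewrite normc_cpow Normc.normc0; apply/eqP; rewrite gt_eqF // powR_gt0.
Qed.

Lemma cpow_cvg0 (e : R) : 0 < e -> cpow p e @[p --> 0^'+] --> (0 : C).
Proof.
move=> e0; apply/cvgCP => eps eps0.
have /cvgrPdist_lt/(_ eps eps0) := powR_cvg0 e0; apply: filterS => p.
by rewrite !sub0r normcN normrN normc_cpow ger0_norm ?powR_ge0.
Qed.

Lemma cvg0_cpow_multiple (X : R -> C) (K : C) (e : R) : 0 < e ->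
  (forall p, 0 < p -> X p = K * cpow p e) -> X p @[p --> 0^'+] --> (0 : C).
Proof.
move=> e0 hX.
have : (K * cpow p e) @[p --> 0^'+] --> (0 : C).
  by rewrite -(mulr0 K); apply: cvgM; [exact: cvg_cst | exact: cpow_cvg0].
apply: cvg_trans; apply: near_eq_cvg.
by near=> p; rewrite hX //; near: p; exact: nbhs_right_gt.
Unshelve. all: by end_near.
Qed.

Lemma cvg0_pAz_B (A B z : C) (a b : R) : 0 < 1 + a + b ->
  (p%:C * (A * cpow p a) * (z * cpow p b) / B) @[p --> 0^'+] --> (0 : C).
Proof.
move=> e0; apply: (@cvg0_cpow_multiple _ (A * z / B) _ e0) => p p0.
rewrite !cpowD // cpow1; [ring | exact: ltW].
Qed.

Lemma cvg0_A_Bz (A B z : C) (a b : R) : 0 < a - b ->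
  (A * cpow p a / (B * (z * cpow p b))) @[p --> 0^'+] --> (0 : C).
Proof.
move=> e0; apply: (@cvg0_cpow_multiple _ (A / (B * z)) _ e0) => p p0.
by rewrite cpowD // cpowN !invfM; ring.
Qed.

Lemma cvg0_pBz_A (A B z : C) (a b : R) : 0 < 1 + b - a ->
  (p%:C * B * (z * cpow p b) / (A * cpow p a)) @[p --> 0^'+] --> (0 : C).
Proof.
move=> e0; apply: (@cvg0_cpow_multiple _ (B * z / A) _ e0) => p p0.
rewrite !cpowD // cpowN cpow1 ?invfM; [ring | exact: ltW].
Qed.

Lemma cvg0_B_Az (A B z : C) (a b : R) : 0 < - a - b ->
  (B / (A * cpow p a * (z * cpow p b))) @[p --> 0^'+] --> (0 : C).
Proof.
move=> e0; apply: (@cvg0_cpow_multiple _ (B / (A * z)) _ e0) => p p0.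
by rewrite cpowD // !cpowN !invfM; ring.
Qed.

Lemma cvgM1 (f g : R -> C) :
  f p @[p --> 0^'+] --> (1 : C) -> g p @[p --> 0^'+] --> (1 : C) ->
  (f p * g p) @[p --> 0^'+] --> (1 : C).
Proof. by move=> hf hg; rewrite -(mulr1 1); apply: cvgM. Qed.

Lemma cvgV1 (f : R -> C) :
  f p @[p --> 0^'+] --> (1 : C) -> (f p)^-1 @[p --> 0^'+] --> (1 : C).
Proof. by move=> hf; rewrite -invr1; apply: cvgV; rewrite ?oner_neq0. Qed.

Lemma cvg1_prod (I : Type) (r : seq I) (F : I -> R -> C) :
  (forall i, F i p @[p --> 0^'+] --> (1 : C)) ->
  (\prod_(i <- r) F i p) @[p --> 0^'+] --> (1 : C).
Proof.
move=> hF; elim: r => [|i r IH].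
  by under eq_fun do rewrite big_nil; exact: cvg_cst.
by under eq_fun do rewrite big_cons; apply: cvgM1.
Qed.

Lemma Phi_sub_cvg1 n (q z : C) (t : 'I_4 -> C) (u0 u1 : C) (alpha : 'I_6 -> R) (zeta : R) :
  1 < normc q ->
  (forall i : 'I_6, 0 < 1 + alpha i + zeta /\ 0 < alpha i - zeta) ->
  0 < 1 + zeta - alpha (inord 4) -> 0 < - alpha (inord 4) - zeta ->
  Phi_sub n q z t u0 u1 alpha zeta p @[p --> 0^'+] --> (1 : C).
Proof.
move=> hq ha h1 h2.
have hq' : 0 < normc q^-1 < 1 by rewrite Normc.normcV invr_gt0 invf_lt1 ?(lt_trans ltr01) ?hq.
have qp := fun X => qpoch2_cvg1 X _ hq'.
rewrite /Phi_sub /Phi; apply: cvgM1; apply: cvgV1.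
  by apply: cvg1_prod => k; apply: cvgM1; apply: qpoch_cvg1; [exact: cvg0_pBz_A | exact: cvg0_B_Az].
apply: cvgM1; last first.
  apply: cvg1_prod => r; have [] := ha (ord4to6 r) => r1 r2.
  by apply: cvgM1; apply: qp; [exact: cvg0_pAz_B | exact: cvg0_A_Bz].
have [] := ha (inord 4) => a1 a2; have [] := ha (inord 5) => b1 b2.
by apply: cvgM1; [apply: cvgM1; [apply: cvgM1|]|]; apply: qp;
  (exact: cvg0_pAz_B || exact: cvg0_A_Bz).
Qed.

Lemma cvgC_unique {T : Type} {F : set_system T} {FF : ProperFilter F} {f : T -> C} {a b : C} :
  f t @[t --> F] --> a -> f t @[t --> F] --> b -> a = b.
Proof. exact: cvg_unique. Qed.

Lemma has_lc_cvg1 {F : R -> C} {v : R} {c : C} :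
  F p @[p --> 0^'+] --> (1 : C) -> has_lc F v c -> c = 1.
Proof.
move=> hF [c0 hc].
have [v0|v0|v0] := ltgtP v 0.
- have : (F p / cpow p v) @[p --> 0^'+] --> (1 * 0 : C).
    under eq_fun do rewrite -cpowN.
    by apply: cvgM; [exact: hF | apply: cpow_cvg0; rewrite oppr_gt0].
  by rewrite mul1r => /(cvgC_unique hc) c_eq0; rewrite c_eq0 eqxx in c0.
- have : F p @[p --> 0^'+] --> (0 : C).
    have : (F p / cpow p v * cpow p v) @[p --> 0^'+] --> (c * 0 : C).
      by apply: cvgM; [exact: hc | exact: cpow_cvg0].
    rewrite mulr0; apply: cvg_trans; apply: near_eq_cvg; near=> p.
    by rewrite divfK // cpow_neq0 //; near: p; exact: nbhs_right_gt.
  by move=> /(cvgC_unique hF) /eqP; rewrite oner_eq0.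
- rewrite v0 in hc; apply: (cvgC_unique hc).
  have -> : (fun p => F p / cpow p 0) = F by apply/funext => p; rewrite cpow0 divr1.
  exact: hF.
Unshelve. all: by end_near.
Qed.

End LeadingCoefficient.

Theorem proposition4p3 (R : realType) (n : nat) (q : Cx R)
  (t : 'I_4 -> Cx R) (u0 u1 : Cx R) (alpha : 'I_6 -> R) (zeta : R) :
  1 < `|q| ->
  (forall r, t r != 0) -> u0 != 0 -> u1 != 0 ->
  inP alpha zeta ->
  (forall r : 'I_6, alpha r + 1/2 != `|zeta + 1/2|) ->
  alpha (inord 4) + `|zeta + 1/2| < 1/2 ->
  forall (z1 z2 : Cx R) (v1 v2 : R) (c1 c2 : Cx R),
    z1 != 0 -> z2 != 0 ->
    has_lc (Phi_sub n q z1 t u0 u1 alpha zeta) v1 c1 ->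
    has_lc (Phi_sub n q z2 t u0 u1 alpha zeta) v2 c2 ->
    c1 = c2.
Proof.
move=> hq _ _ _ [_ _ halpha _ _] hne h4 z1 z2 v1 v2 c1 c2 _ _ hl1 hl2.
have hq' : 1 < Normc.normc q by rewrite -ltcR -normcE.
have := ler_norm (zeta + 1/2); have := ler_norm (- (zeta + 1/2)); rewrite normrN => hs1 hs2.
have ha i : 0 < 1 + alpha i + zeta /\ 0 < alpha i - zeta.
  have := halpha i; rewrite [1/2 + _]addrC => hi.
  have : `|zeta + 1/2| < alpha i + 1/2 by rewrite lt_neqAle eq_sym hne /=; lra.
  by split; lra.
have hb1 : 0 < 1 + zeta - alpha (inord 4) by lra.
have hb2 : 0 < - alpha (inord 4) - zeta by lra.
have Phi1 z := @Phi_sub_cvg1 R n q z t u0 u1 alpha zeta hq' ha hb1 hb2.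
by rewrite (has_lc_cvg1 _ (Phi1 z1) hl1) (has_lc_cvg1 _ (Phi1 z2) hl2).
Qed.
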